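(* Consider the two-sided market model described in the context with $\phi(x)=x^\theta$ for some $0<\theta<1$, and CP cost parameter $a>\zeta$. Let $S_{NN}(a)=\mathcal S(y_0)$ be the social welfare under net neutrality (all consumers and all CPs participate) and $S_{RM}(a)=\mathcal S(y^*(a))$ the social welfare under ISP revenue maximization, where $y^*(a)$ solves $g(y^* )=a$. Then there exists a unique $\bar a>\zeta$ such that for $\zeta<a<\bar a$ net neutrality yields higher social welfare than revenue maximization ($S_{NN}(a)>S_{RM}(a)$), while for $a>\bar a$ revenue maximization yields higher social welfare ($S_{RM}(a)>S_{NN}(a)$).
   Context: Model: fix $\gamma>2$, $\beta>2$, $\lambda>0$. Consumer types have density $x^{-\gamma}$ on $x\ge x_0:=(\frac{1}{\gamma-1})^{\frac{1}{\gamma-1}}$, CP types density $y^{-\beta}$ on $y\ge y_0:=(\frac{1}{\beta-1})^{\frac{1}{\beta-1}}$. Let $Y(s)=\int_s^\infty y^{1-\beta}dy$, $\bar X=\int_{x_0}^\infty x^{1-\gamma}dx$, $\bar Y=Y(y_0)$. With all consumers participating and CPs of type $\ge y$ participating, the social welfare (for CP cost parameter $a$) is $\mathcal S(y)=\int_{x_0}^\infty\phi(x\sqrt{\bar YY(y)})x^{-\gamma}dx+\lambda\bar X\sqrt{\bar YY(y)}-aY(y)$. The revenue-maximizing ISP (charging a membership fee and a CP fee that make threshold types indifferent) excludes all consumers below $x_0$ and CPs below $y^*$, where $y^*$ solves $g(y^* )=a$ with $g(y)=\frac12\big(\frac{\gamma-2}{\gamma-1}\phi'(x_0\sqrt{\bar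 Y Y(y)})+\lambda\big)\frac{\bar X\sqrt{\bar Y}}{\sqrt{Y(y)}}$ (increasing in $y$). Also $\zeta=\max\{\frac{1}{2}(\frac{\gamma-2}{\gamma-1}\phi'(\bar Yx_0)+\lambda)\bar X,\ \frac{1}{2}(\int_{x_0}^{\infty}\phi'(x\bar Y)x^{1-\gamma}dx+\lambda \bar X)\}$; for $a>\zeta$ net neutrality is not socially optimal. *)

From Stdlib Require Import Reals.
From Coquelicot Require Import Coquelicot.
Open Scope R_scope.

Definition Int_from (f : R -> R) (s : R) : R :=
  RInt_gen f (at_point s) (Rbar_locally p_infty).

(* lowest types *)
Definition x0 (gamma : R) : R := Rpower (/ (gamma - 1)) (/ (gamma - 1)).
Definition y0 (beta : R) : R := Rpower (/ (beta - 1)) (/ (beta - 1)).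

Definition Yf (beta s : R) : R := Int_from (fun y => Rpower y (1 - beta)) s.
Definition Xbar (gamma : R) : R :=
  Int_from (fun x => Rpower x (1 - gamma)) (x0 gamma).
Definition Ybar (beta : R) : R := Yf beta (y0 beta).

Definition Swel (gamma beta lambda : R) (phi : R -> R) (a y : R) : R :=
  Int_from (fun x => phi (x * sqrt (Ybar beta * Yf beta y)) * Rpower x (- gamma))
           (x0 gamma)
  + lambda * Xbar gamma * sqrt (Ybar beta * Yf beta y)
  - a * Yf beta y.

(* g(y), whose solution g(y_star) = a gives the revenue-maximizing CP threshold *)
Definition gfun (gamma beta lambda : R) (phi : R -> R) (y : R) : R :=
  / 2 * ((gamma - 2) / (gamma - 1) * Derive phi (x0 gamma * sqrt (Ybar beta * Yf beta y))
         + lambda)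
  * (Xbar gamma * sqrt (Ybar beta)) / sqrt (Yf beta y).

Definition zeta (gamma beta lambda : R) (phi : R -> R) : R :=
  Rmax (/ 2 * ((gamma - 2) / (gamma - 1) * Derive phi (Ybar beta * x0 gamma) + lambda)
          * Xbar gamma)
       (/ 2 * (Int_from (fun x => Derive phi (x * Ybar beta) * Rpower x (1 - gamma)) (x0 gamma)
               + lambda * Xbar gamma)).

Definition phi_pow (theta : R) (x : R) : R := Rpower x theta.

(* With phi(x) = x^theta every integral is explicit.  In the variable u = (2 - beta) ln (y / y0),
   which maps y >= y0 onto u <= 0, one has Y(y) = Ybar e^u, the welfare is Ybar times
   S(a, u) = M e^(theta u / 2) + L e^(u / 2) - a e^u and g becomes
   (m e^((theta / 2 - 1) u) + L e^(-u / 2)) / 2 with m < theta M.  This g is strictly decreasing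
   with g(0) < zeta = theta M / 2 + L / 2, so y*(a) is unique for a > zeta.  At a = g(u) the sign of
   S_NN - S_RM is that of gap(u) = U(u) - L H(u) with H > 0: the gap is negative as u -> -oo,
   positive where g(u) = zeta (strict convexity of exp), and U / H is strictly increasing as soon
   as U > 0.  Hence the gap vanishes at a single u_s, and abar = g(u_s). *)

From Stdlib Require Import Reals Lra.
From Coquelicot Require Import Coquelicot.
Open Scope R_scope.

Ltac auto_derive_evar :=
  auto_derive;
  try match goal with |- _ = ?l => is_evar l; reflexivity end;
  try exact I.

Lemma is_derive_eq (f : R -> R) (x l l' : R) : is_derive f x l -> l = l' -> is_derive f x l'.
Proof. now intros H <-. Qed.

Lemma Rpower_pos x p : 0 < Rpower x p.
Proof. apply exp_pos. Qed.

Lemma exp_lt_1 u : u < 0 -> exp u < 1.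
Proof. intros H. rewrite <- exp_0. now apply exp_increasing. Qed.

Lemma exp_half_mul u : exp (u / 2) * exp (u / 2) = exp u.
Proof. rewrite <- exp_plus. f_equal. field. Qed.

Lemma lt_of_derive_pos (f f' : R -> R) a b : a < b ->
  (forall c, a <= c <= b -> is_derive f c (f' c)) ->
  (forall c, a < c < b -> 0 < f' c) -> f a < f b.
Proof.
  intros Hab Hd Hp.
  destruct (MVT_cor2 f f' a b Hab) as [c [Hc1 Hc2]].
  { intros c Hc. now apply is_derive_Reals, Hd. }
  assert (0 < f' c * (b - a)) by (apply Rmult_lt_0_compat; [apply Hp|]; lra).
  lra.
Qed.

Lemma le_of_derive_nonneg (f f' : R -> R) a b : a <= b ->
  (forall c, a <= c <= b -> is_derive f c (f' c)) ->
  (forall c, a < c < b -> 0 <= f' c) -> f a <= f b.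
Proof.
  intros Hab Hd Hp. destruct (Rle_lt_or_eq_dec _ _ Hab) as [Hlt| <-]; [|lra].
  destruct (MVT_cor2 f f' a b Hlt) as [c [Hc1 Hc2]].
  { intros c Hc. now apply is_derive_Reals, Hd. }
  assert (0 <= f' c * (b - a)) by (apply Rmult_le_pos; [apply Hp|]; lra).
  lra.
Qed.

Lemma is_derive_scal_Rpower (C p x : R) : 0 < x ->
  is_derive (fun y => C * Rpower y p) x (C * (p * Rpower x (p - 1))).
Proof.
  intros Hx. apply (is_derive_scal (fun y => Rpower y p)).
  apply is_derive_Reals, derivable_pt_lim_power, Hx.
Qed.

Lemma is_lim_Rpower_p_infty (p : R) : p < 0 -> is_lim (fun y => Rpower y p) p_infty 0.
Proof.
  intros Hp. unfold Rpower.
  apply (is_lim_comp exp (fun y => p * ln y) p_infty 0 m_infty).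
  - apply is_lim_exp_m.
  - replace m_infty with (Rbar_mult p p_infty).
    + apply is_lim_scal_l, is_lim_ln_p.
    + simpl. destruct (Rle_dec 0 p); [exfalso; lra|reflexivity].
  - exists 0. intros y _. discriminate.
Qed.

Lemma filter_prod_pos_ray (s : R) (P : R -> Prop) : 0 < s -> (forall x, 0 < x -> P x) ->
  filter_prod (at_point s) (Rbar_locally p_infty)
    (fun ab => forall x, Rmin (fst ab) (snd ab) <= x <= Rmax (fst ab) (snd ab) -> P x).
Proof.
  intros Hs HP. apply (Filter_prod _ _ _ (fun x => x = s) (fun y => s < y)).
  - reflexivity.
  - now exists s.
  - intros a b -> Hb x Hx. simpl in Hx. rewrite Rmin_left in Hx by lra. apply HP. lra.
Qed.

(* FTC with the antiderivative [C / (p + 1) * x ^ (p + 1)], which vanishes at [+oo]. *)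
Lemma Int_from_Rpower (f : R -> R) (C p s : R) : p < -1 -> 0 < s ->
  (forall x, 0 < x -> f x = C * Rpower x p) ->
  Int_from f s = - (C / (p + 1) * Rpower s (p + 1)).
Proof.
  intros Hp Hs Hf.
  set (F := fun y => C / (p + 1) * Rpower y (p + 1)).
  assert (HF : forall x, 0 < x -> is_derive F x (C * Rpower x p)).
  { intros x Hx. eapply is_derive_eq; [now apply is_derive_scal_Rpower|].
    replace (p + 1 - 1) with p by ring. field. lra. }
  apply is_RInt_gen_unique, (is_RInt_gen_ext (Derive F)).
  { refine (filter_imp _ _ _ (filter_prod_pos_ray s (fun x => 0 < x) Hs (fun x Hx => Hx))).
    intros [a b] H x Hx. simpl in *. assert (0 < x) by (apply H; split; lra).
    rewrite Hf by assumption. now apply is_derive_unique, HF. }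
  replace (- (C / (p + 1) * Rpower s (p + 1))) with (0 - F s) by (unfold F; ring).
  apply is_RInt_gen_Derive.
  - apply filter_prod_pos_ray; [exact Hs|]. intros x Hx. eexists. now apply HF.
  - apply filter_prod_pos_ray; [exact Hs|]. intros x Hx.
    apply continuous_ext_loc with (g := fun y => C * Rpower y p).
    + apply (locally_open (fun y => 0 < y)); [apply open_gt| |exact Hx].
      intros y Hy. symmetry. now apply is_derive_unique, HF.
    + apply (@ex_derive_continuous R_AbsRing R_NormedModule).
      eexists. now apply is_derive_scal_Rpower.
  - intros P HP. unfold filtermap, at_point. now apply locally_singleton.
  - assert (H : is_lim F p_infty (Rbar_mult (C / (p + 1)) 0)).
    { apply (is_lim_scal_l _ (C / (p + 1)) p_infty 0). apply is_lim_Rpower_p_infty. lra. }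
    rewrite Rbar_mult_0_r in H. exact H.
Qed.

Lemma exp_convex_lt al u : 0 < al < 1 -> u < 0 -> exp (al * u) < al * exp u + (1 - al).
Proof.
  intros Hal Hu.
  set (f := fun v => exp (al * v) - al * exp v).
  assert (H : f u < f 0).
  { apply (lt_of_derive_pos f (fun v => al * (exp (al * v) - exp v))); [exact Hu| |].
    - intros c _. eapply is_derive_eq; [unfold f; auto_derive_evar|]. ring.
    - intros c Hc. apply Rmult_lt_0_compat; [lra|].
      assert (exp c < exp (al * c)) by (apply exp_increasing; nra). lra. }
  unfold f in H. rewrite Rmult_0_r, exp_0 in H. lra.
Qed.

Lemma exp_al_half_ineq al u : 0 < al < 1 -> u < 0 ->
  2 * al * exp (al * u) * (1 - exp (u / 2)) <= (1 - exp (al * u)) * (1 + exp (u / 2)).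
Proof.
  intros Hal Hu.
  set (p := exp (al * u)). set (s := exp (u / 2)).
  assert (Hp : 0 < p) by apply exp_pos. assert (Hs : 0 < s) by apply exp_pos.
  assert (Hp1 : p < 1) by (apply exp_lt_1; nra).
  assert (Hs1 : 1 + u / 2 <= s) by apply exp_ineq1_le.
  assert (He : 1 + - (al * u) <= / p) by (unfold p; rewrite <- exp_Ropp; apply exp_ineq1_le).
  assert (H1 : - al * u * p <= 1 - p).
  { apply (Rmult_le_compat_r p) in He; [|lra]. rewrite Rinv_l in He by lra. nra. }
  assert (H2 : al * p * (2 * (1 - s)) <= al * p * (- u)).
  { apply Rmult_le_compat_l; [|lra]. apply Rmult_le_pos; lra. }
  assert (H3 : 0 <= (1 - p) * s) by (apply Rmult_le_pos; lra).
  nra.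
Qed.

(* Thresholds range over [D], [base] is the net-neutral one and [g y = a] selects the
   revenue-maximizing one. *)
Definition welfare_threshold (D : R -> Prop) (base z : R) (g : R -> R) (S : R -> R -> R) : Prop :=
  (forall a, z < a -> exists! y, D y /\ g y = a) /\
  exists! abar, z < abar /\
    (forall a y, z < a < abar -> D y -> g y = a -> S a base > S a y) /\
    (forall a y, abar < a -> D y -> g y = a -> S a y > S a base).

Lemma welfare_threshold_intro D base z g S :
  (forall a, z < a -> exists! y, D y /\ g y = a) ->
  (exists abar, z < abar /\
    (forall a y, z < a < abar -> D y -> g y = a -> S a base > S a y) /\
    (forall a y, abar < a -> D y -> g y = a -> S a y > S a base)) ->
  welfare_threshold D base z g S.
Proof.
  intros Hsol [abar Habar]. split; [exact Hsol|]. exists abar. split; [exact Habar|].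
  intros ab [Hab [P1 P2]]. destruct Habar as [Hz [Q1 Q2]].
  (* at the midpoint between two distinct thresholds the two sign conditions clash *)
  destruct (Rtotal_order abar ab) as [h|[h|h]]; [|exact h|];
    set (a := (abar + ab) / 2);
    destruct (Hsol a ltac:(unfold a; lra)) as [y [[Hy Hga] _]].
  - pose proof (P1 a y ltac:(unfold a; lra) Hy Hga).
    pose proof (Q2 a y ltac:(unfold a; lra) Hy Hga). lra.
  - pose proof (Q1 a y ltac:(unfold a; lra) Hy Hga).
    pose proof (P2 a y ltac:(unfold a; lra) Hy Hga). lra.
Qed.

Lemma welfare_threshold_transfer {D1 D2 : R -> Prop} {b1 b2 z : R} {g1 g2 : R -> R}
  {S1 S2 : R -> R -> R} (f : R -> R) (c : R) :
  welfare_threshold D2 b2 z g2 S2 ->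
  0 < c ->
  (forall y, D1 y -> D2 (f y)) ->
  (forall u, D2 u -> exists y, D1 y /\ f y = u) ->
  (forall y y', D1 y -> D1 y' -> f y = f y' -> y = y') ->
  D1 b1 -> f b1 = b2 ->
  (forall y, D1 y -> g1 y = g2 (f y)) ->
  (forall a y, D1 y -> S1 a y = c * S2 a (f y)) ->
  welfare_threshold D1 b1 z g1 S1.
Proof.
  intros [Hsol [abar [[Hz [P1 P2]] _]]] Hc Hdom Hsurj Hinj Hb1 Hfb Hg HS.
  apply welfare_threshold_intro.
  - intros a Ha. destruct (Hsol a Ha) as [u [[Hu Hgu] Huniq]].
    destruct (Hsurj u Hu) as [y [Hy <-]].
    exists y. split; [split; [exact Hy|now rewrite Hg]|].
    intros y' [Hy' Hgy']. apply Hinj; [exact Hy|exact Hy'|].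
    apply Huniq. split; [now apply Hdom|now rewrite <- Hg].
  - exists abar. split; [exact Hz|].
    split; intros a y Ha Hy Hgy; rewrite !HS, Hfb by assumption;
      apply Rmult_gt_compat_l; try exact Hc; rewrite Hg in Hgy by exact Hy.
    + exact (P1 a (f y) Ha (Hdom y Hy) Hgy).
    + exact (P2 a (f y) Ha (Hdom y Hy) Hgy).
Qed.

Section Reduced.

Variables al M m L : R.
Hypothesis Hal : 0 < al < 1.
Hypothesis HM : 0 < M.
Hypothesis Hm : 0 < m.
Hypothesis HL : 0 < L.
Hypothesis Hm_lt : m < 2 * al * M.

Definition g_red u := (m * exp ((al - 1) * u) + L * exp (- (u / 2))) / 2.
Definition S_red a u := M * exp (al * u) + L * exp (u / 2) - a * exp u.
Definition zeta_red := al * M + L / 2.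

Lemma g_red_0 : g_red 0 = (m + L) / 2.
Proof.
  unfold g_red. replace ((al - 1) * 0) with 0 by ring. replace (- (0 / 2)) with 0 by field.
  rewrite exp_0. field.
Qed.

Lemma g_red0_lt_zeta : g_red 0 < zeta_red.
Proof. rewrite g_red_0. unfold zeta_red. lra. Qed.

Lemma g_red_decr u v : u < v -> g_red v < g_red u.
Proof.
  intros H. unfold g_red.
  assert (exp ((al - 1) * v) < exp ((al - 1) * u)) by (apply exp_increasing; nra).
  assert (exp (- (v / 2)) < exp (- (u / 2))) by (apply exp_increasing; lra).
  nra.
Qed.

Lemma g_red_lt_inv u v : g_red u < g_red v -> v < u.
Proof.
  intros H. destruct (Rtotal_order v u) as [h|[->|h]]; [exact h|lra|].
  apply g_red_decr in h. lra.
Qed.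

Lemma g_red_continuous u : continuous g_red u.
Proof.
  apply (@ex_derive_continuous R_AbsRing R_NormedModule). unfold g_red. auto_derive. exact I.
Qed.

Lemma g_red_surj a : g_red 0 < a -> exists u, u <= 0 /\ g_red u = a.
Proof.
  intros Ha. pose proof g_red_0 as Hg0.
  set (u1 := - (4 * a / L)).
  assert (Hu1 : u1 < 0) by (unfold u1; apply Ropp_lt_gt_0_contravar, Rdiv_lt_0_compat; lra).
  assert (Hau1 : a < g_red u1).
  { unfold g_red. pose proof (exp_ineq1_le (- (u1 / 2))). pose proof (exp_pos ((al - 1) * u1)).
    assert (L * (1 + - (u1 / 2)) = L + 2 * a) by (unfold u1; field; lra). nra. }
  destruct (IVT_gen_consistent g_red u1 0 a) as [u [Hu Hgu]].
  - exact g_red_continuous.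
  - rewrite Rmin_right, Rmax_left; lra.
  - exists u. rewrite Rmin_left, Rmax_right in Hu by lra. split; [lra|exact Hgu].
Qed.

Lemma g_red_unique_sol a : g_red 0 < a -> exists! u, u <= 0 /\ g_red u = a.
Proof.
  intros Ha. destruct (g_red_surj a Ha) as [u [Hu Hgu]].
  exists u. split; [now split|]. intros v [_ Hgv].
  destruct (Rtotal_order u v) as [h|[h|h]]; [|exact h|];
    apply g_red_decr in h; lra.
Qed.

(* [S_NN - S_RM] (divided by [Ybar]) at the cost parameter [a = g_red u] whose threshold is [u]. *)
Definition gap u := S_red (g_red u) 0 - S_red (g_red u) u.
Definition gap_phi u := M * (1 - exp (al * u)) - m * (1 - exp u) * exp (al * u) / (2 * exp u).
Definition gap_lambda u := (1 - exp (u / 2)) * (1 - exp (u / 2)) / (2 * exp (u / 2)).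

Lemma gap_split u : gap u = gap_phi u - L * gap_lambda u.
Proof.
  unfold gap, S_red, g_red, gap_phi, gap_lambda.
  rewrite Rmult_0_r, Rdiv_0_l, exp_0.
  replace ((al - 1) * u) with (al * u + - u) by ring. rewrite exp_plus, !exp_Ropp.
  rewrite <- (exp_half_mul u).
  pose proof (exp_pos (u / 2)). pose proof (exp_pos (al * u)).
  field. lra.
Qed.

Lemma gap_lambda_pos u : u < 0 -> 0 < gap_lambda u.
Proof.
  intros Hu. unfold gap_lambda.
  pose proof (exp_lt_1 (u / 2) ltac:(lra)). pose proof (exp_pos (u / 2)).
  apply Rdiv_lt_0_compat; nra.
Qed.

Lemma gap_continuous u : continuous gap u.
Proof.
  apply (@ex_derive_continuous R_AbsRing R_NormedModule).
  unfold gap, S_red, g_red. auto_derive. exact I.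
Qed.

Lemma gap_pos_at_zeta u : u < 0 -> g_red u = zeta_red -> 0 < gap u.
Proof.
  intros Hu Hg. unfold gap. rewrite Hg. unfold S_red, zeta_red.
  rewrite Rmult_0_r, Rdiv_0_l, exp_0.
  pose proof (exp_convex_lt al u Hal Hu). rewrite <- (exp_half_mul u) in *.
  set (s := exp (u / 2)) in *. set (p := exp (al * u)) in *.
  assert (s < 1) by (apply exp_lt_1; lra).
  assert (0 < M * (al * (s * s) + (1 - al) - p)) by (apply Rmult_lt_0_compat; lra).
  assert (0 < L * ((1 - s) * (1 - s))) by (apply Rmult_lt_0_compat; nra).
  nra.
Qed.

Lemma gap_phi_neg u : u <= -1 -> 4 * M <= m * (1 - al) * - u -> gap_phi u < 0.
Proof.
  intros Hu1 HuK. unfold gap_phi.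
  assert (HE : exp u < / 2).
  { assert (Hle : exp u <= / exp 1).
    { rewrite <- exp_Ropp. destruct (Rle_lt_or_eq_dec _ _ Hu1) as [h| ->].
      - left. apply exp_increasing. lra.
      - right. f_equal. }
    pose proof (exp_ineq1 1 ltac:(lra)).
    assert (/ exp 1 < / 2) by (apply Rinv_lt_contravar; lra). lra. }
  set (q := exp ((al - 1) * u)).
  assert (Hq : m * (1 - exp u) * exp (al * u) / (2 * exp u) = m * q * (1 - exp u) / 2).
  { unfold q. replace ((al - 1) * u) with (al * u + - u) by ring.
    rewrite exp_plus, exp_Ropp. pose proof (exp_pos u). field. lra. }
  rewrite Hq.
  assert (Hmq : m + 4 * M <= m * q).
  { assert (1 + (al - 1) * u <= q) by apply exp_ineq1_le. nra. }
  assert (m * q * / 2 <= m * q * (1 - exp u)) by (apply Rmult_le_compat_l; nra).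
  assert (0 < M * exp (al * u)) by (apply Rmult_lt_0_compat; [lra|apply exp_pos]).
  lra.
Qed.

Lemma gap_neg_far v : exists u, u <= v /\ gap u < 0.
Proof.
  assert (Hc : 0 < m * (1 - al)) by (apply Rmult_lt_0_compat; lra).
  set (K := 4 * M / (m * (1 - al))).
  assert (HK : 0 <= K) by (left; apply Rdiv_lt_0_compat; lra).
  set (u := Rmin v (- (1 + K))).
  assert (Hu : u <= v /\ u <= - (1 + K)) by (split; [apply Rmin_l|apply Rmin_r]).
  exists u. split; [apply Hu|]. rewrite gap_split.
  assert (Hphi : gap_phi u < 0).
  { apply gap_phi_neg; [lra|].
    replace (4 * M) with (m * (1 - al) * K) by (unfold K; field; lra).
    apply Rmult_le_compat_l; lra. }
  pose proof (gap_lambda_pos u ltac:(lra)). nra.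
Qed.

Definition gap_phi_scaled u := M * (exp u / exp (al * u) - exp u) - m * (1 - exp u) / 2.
Definition scaled_slope u := M * ((1 - al) / exp (al * u) - 1) + m / 2.

Lemma gap_phi_scaled_eq u : gap_phi_scaled u = gap_phi u * (exp u / exp (al * u)).
Proof.
  unfold gap_phi_scaled, gap_phi. pose proof (exp_pos u). pose proof (exp_pos (al * u)).
  field. lra.
Qed.

Lemma gap_phi_scaled_pos u : 0 < gap_phi u -> 0 < gap_phi_scaled u.
Proof.
  intros H. rewrite gap_phi_scaled_eq.
  apply Rmult_lt_0_compat; [exact H|apply Rdiv_lt_0_compat; apply exp_pos].
Qed.

Lemma gap_phi_scaled_0 : gap_phi_scaled 0 = 0.
Proof. unfold gap_phi_scaled. rewrite Rmult_0_r, exp_0. field. Qed.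

Lemma is_derive_gap_phi_scaled u : is_derive gap_phi_scaled u (exp u * scaled_slope u).
Proof.
  unfold gap_phi_scaled, scaled_slope. pose proof (exp_pos (al * u)).
  eapply is_derive_eq; [auto_derive_evar; lra|]. field. lra.
Qed.

Lemma scaled_slope_decr u v : u <= v -> scaled_slope v <= scaled_slope u.
Proof.
  intros H. unfold scaled_slope, Rdiv.
  assert (exp (al * u) <= exp (al * v)).
  { destruct (Rle_lt_or_eq_dec _ _ H) as [h| <-]; [|lra]. left. apply exp_increasing. nra. }
  assert (/ exp (al * v) <= / exp (al * u))
    by (apply Rinv_le_contravar; [apply exp_pos|assumption]).
  assert (0 < M * (1 - al)) by (apply Rmult_lt_0_compat; lra).
  nra.
Qed.

(* The scaled gap starts at [0] for [u = 0] and its slope factor decreases, so once positive it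
   cannot come back to [0] before [u = 0]. *)
Lemma gap_phi_scaled_pos_right u v : u < v < 0 -> 0 < gap_phi_scaled u -> 0 < gap_phi_scaled v.
Proof.
  intros [Huv Hv] Hu.
  destruct (Rlt_or_le (scaled_slope v) 0) as [Hs|Hs].
  - assert (H : - gap_phi_scaled v < - gap_phi_scaled 0).
    { apply (lt_of_derive_pos (fun x => - gap_phi_scaled x) (fun x => - (exp x * scaled_slope x)));
        [exact Hv| |].
      - intros c _. apply (is_derive_opp gap_phi_scaled), is_derive_gap_phi_scaled.
      - intros c Hc. pose proof (scaled_slope_decr v c ltac:(lra)). pose proof (exp_pos c). nra. }
    rewrite gap_phi_scaled_0 in H. lra.
  - assert (H : gap_phi_scaled u <= gap_phi_scaled v).
    { apply (le_of_derive_nonneg gap_phi_scaled (fun x => exp x * scaled_slope x)); [lra| |].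
      - intros c _. apply is_derive_gap_phi_scaled.
      - intros c Hc. pose proof (scaled_slope_decr c v ltac:(lra)). pose proof (exp_pos c). nra. }
    lra.
Qed.

Definition gap_ratio u := gap_phi u / gap_lambda u.
Definition ratio_numer u :=
  -2 * al * M * (exp (u / 2) * exp (u / 2)) + m * (exp (u / 2) * exp (u / 2))
  + m * (1 - al) * (1 - exp (u / 2) * exp (u / 2))
  + gap_phi_scaled u * (1 + exp (u / 2)) / (1 - exp (u / 2)).
Definition gap_ratio_deriv u :=
  (1 - exp (u / 2)) * (1 - exp (u / 2)) * exp (al * u) * ratio_numer u
  / (4 * exp (u / 2) * exp (u / 2) * exp (u / 2)) / (gap_lambda u * gap_lambda u).

Lemma is_derive_gap_ratio u : u < 0 -> is_derive gap_ratio u (gap_ratio_deriv u).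
Proof.
  intros Hu. pose proof (gap_lambda_pos u Hu) as HH.
  pose proof (exp_pos (u / 2)). pose proof (exp_pos (al * u)). pose proof (exp_pos u).
  pose proof (exp_lt_1 (u / 2) ltac:(lra)).
  unfold gap_ratio, gap_ratio_deriv, ratio_numer, gap_phi_scaled, gap_lambda, gap_phi in *.
  eapply is_derive_eq.
  { auto_derive_evar. change (u * / 2) with (u / 2). repeat split; lra. }
  rewrite <- (exp_half_mul u). change (u * / 2) with (u / 2).
  set (s := exp (u / 2)) in *. set (p := exp (al * u)) in *.
  field. repeat split; lra.
Qed.

Lemma ratio_numer_pos u : u < 0 -> 0 < gap_phi_scaled u -> 0 < ratio_numer u.
Proof.
  intros Hu HV.
  pose proof (exp_al_half_ineq al u Hal Hu) as Hhalf.
  pose proof (exp_convex_lt al u Hal Hu) as Hconv.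
  unfold ratio_numer. unfold gap_phi_scaled in *. rewrite <- (exp_half_mul u) in *.
  set (s := exp (u / 2)) in *. set (p := exp (al * u)) in *.
  assert (Hs : 0 < s) by apply exp_pos. assert (Hp : 0 < p) by apply exp_pos.
  assert (Hs1 : s < 1) by (apply exp_lt_1; lra).
  assert (Hp1 : p < 1) by (apply exp_lt_1; nra).
  set (w := M * (s * s / p - s * s) - m * (1 - s * s) / 2) in *.
  set (T := s * s * (1 - p) / p).
  assert (HT : 0 < T) by (unfold T; apply Rdiv_lt_0_compat; [apply Rmult_lt_0_compat; nra|lra]).
  assert (A1 : 0 <= (1 + s) / (1 - s) * T - 2 * al * (s * s)).
  { replace ((1 + s) / (1 - s) * T - 2 * al * (s * s)) with
      (s * s * ((1 - p) * (1 + s) - 2 * al * p * (1 - s)) / (p * (1 - s)))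
      by (unfold T; field; lra).
    apply Rmult_le_pos; [apply Rmult_le_pos; nra|].
    left. apply Rinv_0_lt_compat. nra. }
  assert (A2 : 0 < T * (1 - al + al * (s * s)) - al * (s * s) * (1 - s * s)).
  { replace (T * (1 - al + al * (s * s)) - al * (s * s) * (1 - s * s)) with
      (s * s * ((1 - al + al * (s * s)) - p) / p) by (unfold T; field; lra).
    apply Rdiv_lt_0_compat; [apply Rmult_lt_0_compat|]; nra. }
  set (E := -2 * al * M * (s * s) + m * (s * s) + m * (1 - al) * (1 - s * s)
            + w * (1 + s) / (1 - s)).
  (* [E * T] splits into a nonnegative multiple of [w] and a positive multiple of [m] *)
  assert (Hid : E * T = w * ((1 + s) / (1 - s) * T - 2 * al * (s * s))
                + m * (T * (1 - al + al * (s * s)) - al * (s * s) * (1 - s * s))).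
  { unfold E, w, T. field. lra. }
  assert (0 < E * T).
  { rewrite Hid.
    assert (0 <= w * ((1 + s) / (1 - s) * T - 2 * al * (s * s))) by (apply Rmult_le_pos; lra).
    assert (0 < m * (T * (1 - al + al * (s * s)) - al * (s * s) * (1 - s * s)))
      by (apply Rmult_lt_0_compat; lra).
    lra. }
  destruct (Rle_or_lt E 0) as [h|h]; [|exact h].
  assert (E * T <= 0) by (apply Rmult_le_0_r; lra). lra.
Qed.

Lemma gap_ratio_lt u1 u2 : u1 < u2 -> u2 < 0 -> 0 < gap_phi u1 -> gap_ratio u1 < gap_ratio u2.
Proof.
  intros H12 H2 HU.
  apply (lt_of_derive_pos gap_ratio gap_ratio_deriv u1 u2 H12).
  - intros c Hc. apply is_derive_gap_ratio. lra.
  - intros c Hc.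
    assert (HV : 0 < gap_phi_scaled c)
      by (apply (gap_phi_scaled_pos_right u1); [lra|now apply gap_phi_scaled_pos]).
    pose proof (ratio_numer_pos c ltac:(lra) HV).
    pose proof (gap_lambda_pos c ltac:(lra)).
    pose proof (exp_pos (c / 2)). pose proof (exp_pos (al * c)).
    pose proof (exp_lt_1 (c / 2) ltac:(lra)).
    unfold gap_ratio_deriv. apply Rdiv_lt_0_compat; [|apply Rmult_lt_0_compat; lra].
    apply Rdiv_lt_0_compat; [|repeat apply Rmult_lt_0_compat; lra].
    apply Rmult_lt_0_compat; [|assumption]. apply Rmult_lt_0_compat; [|lra]. nra.
Qed.

Lemma gap_eq_ratio u : u < 0 -> gap u = (gap_ratio u - L) * gap_lambda u.
Proof.
  intros Hu. pose proof (gap_lambda_pos u Hu).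
  rewrite gap_split. unfold gap_ratio. field. lra.
Qed.

Lemma gap_sign_change : exists us, us < 0 /\ zeta_red < g_red us /\
  (forall u, us < u < 0 -> 0 < gap u) /\ (forall u, u < us -> gap u < 0).
Proof.
  destruct (g_red_surj zeta_red g_red0_lt_zeta) as [uz [Huz Hgz]].
  assert (Huz' : uz < 0).
  { destruct (Rle_lt_or_eq_dec _ _ Huz) as [h| ->]; [exact h|].
    pose proof g_red0_lt_zeta. lra. }
  pose proof (gap_pos_at_zeta uz Huz' Hgz) as Hgap_z.
  destruct (gap_neg_far (uz - 1)) as [ul [Hul Hgap_l]].
  destruct (IVT_gen_consistent gap ul uz 0) as [us [Hus Hgap_s]].
  { exact gap_continuous. }
  { rewrite Rmin_left, Rmax_right; lra. }
  rewrite Rmin_left, Rmax_right in Hus by lra.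
  assert (Hus' : us < uz).
  { destruct (Rle_lt_or_eq_dec _ _ (proj2 Hus)) as [h| ->]; [exact h|lra]. }
  pose proof (gap_lambda_pos us ltac:(lra)) as HHs.
  assert (Hphi_s : 0 < gap_phi us) by (rewrite gap_split in Hgap_s; nra).
  assert (Hratio_s : gap_ratio us = L).
  { rewrite gap_eq_ratio in Hgap_s by lra.
    destruct (Rmult_integral _ _ Hgap_s); lra. }
  exists us. repeat split.
  - lra.
  - rewrite <- Hgz. now apply g_red_decr.
  - intros u Hu. pose proof (gap_ratio_lt us u ltac:(lra) ltac:(lra) Hphi_s).
    rewrite gap_eq_ratio by lra. apply Rmult_lt_0_compat; [lra|apply gap_lambda_pos; lra].
  - intros u Hu. pose proof (gap_lambda_pos u ltac:(lra)).
    destruct (Rle_or_lt (gap_phi u) 0) as [h|h].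
    + rewrite gap_split. nra.
    + pose proof (gap_ratio_lt u us Hu ltac:(lra) h).
      rewrite gap_eq_ratio by lra. nra.
Qed.

Theorem reduced_threshold : welfare_threshold (fun u => u <= 0) 0 zeta_red g_red S_red.
Proof.
  pose proof g_red0_lt_zeta as Hg0.
  apply welfare_threshold_intro.
  { intros a Ha. apply g_red_unique_sol. lra. }
  destruct gap_sign_change as [us (Hus & Hz & Hpos & Hneg)].
  exists (g_red us). split; [exact Hz|]. split.
  - intros a u [Ha Ha'] _ <-.
    pose proof (Hpos u (conj (g_red_lt_inv _ _ Ha') (g_red_lt_inv 0 u ltac:(lra)))) as Hgap.
    unfold gap in Hgap. lra.
  - intros a u Ha _ <-.
    pose proof (Hneg u (g_red_lt_inv _ _ Ha)) as Hgap. unfold gap in Hgap. lra.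
Qed.

End Reduced.

Lemma x0_pos gamma : 0 < x0 gamma.
Proof. apply Rpower_pos. Qed.

Lemma y0_pos beta : 0 < y0 beta.
Proof. apply Rpower_pos. Qed.

Lemma Yf_closed beta s : 2 < beta -> 0 < s -> Yf beta s = Rpower s (2 - beta) / (beta - 2).
Proof.
  intros Hb Hs. unfold Yf.
  rewrite (Int_from_Rpower _ 1 (1 - beta) s); [| lra | exact Hs | intros; ring].
  replace (1 - beta + 1) with (2 - beta) by ring. field. lra.
Qed.

Lemma Xbar_closed gamma : 2 < gamma -> Xbar gamma = Rpower (x0 gamma) (2 - gamma) / (gamma - 2).
Proof.
  intros Hg. unfold Xbar.
  rewrite (Int_from_Rpower _ 1 (1 - gamma) (x0 gamma)); [| lra | apply x0_pos | intros; ring].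
  replace (1 - gamma + 1) with (2 - gamma) by ring. field. lra.
Qed.

Lemma Derive_phi_pow theta q : 0 < q -> Derive (phi_pow theta) q = theta * Rpower q (theta - 1).
Proof.
  intros Hq. apply is_derive_unique.
  apply is_derive_ext with (f := fun y => 1 * Rpower y theta); [intros t; apply Rmult_1_l|].
  eapply is_derive_eq; [now apply is_derive_scal_Rpower|]. ring.
Qed.

Lemma Int_phi_pow gamma theta c : 2 < gamma -> 0 < theta < 1 -> 0 < c ->
  Int_from (fun x => phi_pow theta (x * c) * Rpower x (- gamma)) (x0 gamma)
  = Rpower c theta * Rpower (x0 gamma) (theta + 1 - gamma) / (gamma - 1 - theta).
Proof.
  intros Hg Hth Hc.
  rewrite (Int_from_Rpower _ (Rpower c theta) (theta - gamma) (x0 gamma)); [| lra | apply x0_pos |].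
  - replace (theta - gamma + 1) with (theta + 1 - gamma) by ring. field. lra.
  - intros x Hx. unfold phi_pow.
    rewrite <- Rpower_mult_distr by assumption.
    replace (theta - gamma) with (theta + - gamma) by ring. rewrite Rpower_plus. ring.
Qed.

Lemma Int_Derive_phi_pow gamma theta c : 2 < gamma -> 0 < theta < 1 -> 0 < c ->
  Int_from (fun x => Derive (phi_pow theta) (x * c) * Rpower x (1 - gamma)) (x0 gamma)
  = theta * Rpower c (theta - 1) * Rpower (x0 gamma) (theta + 1 - gamma) / (gamma - 1 - theta).
Proof.
  intros Hg Hth Hc.
  rewrite (Int_from_Rpower _ (theta * Rpower c (theta - 1)) (theta - gamma) (x0 gamma));
    [| lra | apply x0_pos |].
  - replace (theta - gamma + 1) with (theta + 1 - gamma) by ring. field. lra.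
  - intros x Hx.
    rewrite Derive_phi_pow by (apply Rmult_lt_0_compat; assumption).
    rewrite <- Rpower_mult_distr by assumption.
    replace (theta - gamma) with ((theta - 1) + (1 - gamma)) by ring. rewrite Rpower_plus. ring.
Qed.

Section Model.

Variables gamma beta lambda theta : R.
Hypothesis Hg : 2 < gamma.
Hypothesis Hb : 2 < beta.
Hypothesis Hl : 0 < lambda.
Hypothesis Hth : 0 < theta < 1.

Lemma Ybar_pos : 0 < Ybar beta.
Proof.
  unfold Ybar. rewrite Yf_closed by (try apply y0_pos; lra).
  apply Rdiv_lt_0_compat; [apply Rpower_pos|lra].
Qed.

Lemma Xbar_pos : 0 < Xbar gamma.
Proof. rewrite Xbar_closed by lra. apply Rdiv_lt_0_compat; [apply Rpower_pos|lra]. Qed.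

Definition red_K := Rpower (Ybar beta) (theta - 1) * Rpower (x0 gamma) (theta + 1 - gamma).
Definition red_M := red_K / (gamma - 1 - theta).
Definition red_m := theta * red_K / (gamma - 1).
Definition red_L := lambda * Xbar gamma.
Definition red_u y := (2 - beta) * (ln y - ln (y0 beta)).

Lemma red_K_pos : 0 < red_K.
Proof. apply Rmult_lt_0_compat; apply Rpower_pos. Qed.

Lemma red_M_pos : 0 < red_M.
Proof. apply Rdiv_lt_0_compat; [apply red_K_pos|lra]. Qed.

Lemma red_m_pos : 0 < red_m.
Proof. pose proof red_K_pos. apply Rdiv_lt_0_compat; [nra|lra]. Qed.

Lemma red_L_pos : 0 < red_L.
Proof. pose proof Xbar_pos. apply Rmult_lt_0_compat; lra. Qed.

Lemma red_m_lt : red_m < 2 * (theta / 2) * red_M.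
Proof.
  pose proof red_K_pos. unfold red_m, red_M.
  replace (2 * (theta / 2) * (red_K / (gamma - 1 - theta)))
    with (theta * red_K / (gamma - 1 - theta))
    by (field; lra).
  apply Rmult_lt_compat_l; [nra|]. apply Rinv_lt_contravar; nra.
Qed.

Lemma Derive_phi_pow_red q : 0 < q ->
  (gamma - 2) / (gamma - 1) * Derive (phi_pow theta) (x0 gamma * (Ybar beta * q))
  = red_m * Rpower q (theta - 1) / Xbar gamma.
Proof.
  intros Hq. pose proof (x0_pos gamma). pose proof Ybar_pos. pose proof Xbar_pos.
  rewrite Derive_phi_pow by (repeat apply Rmult_lt_0_compat; assumption).
  rewrite <- !Rpower_mult_distr by (try apply Rmult_lt_0_compat; assumption).
  (* [Ybar beta] is convertible to [Xbar beta], so the instance of [Xbar_closed] must be explicit *)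
  rewrite (Xbar_closed gamma) by lra. unfold red_m, red_K.
  replace (theta + 1 - gamma) with ((theta - 1) + (2 - gamma)) by ring. rewrite Rpower_plus.
  pose proof (Rpower_pos (x0 gamma) (2 - gamma)). field. lra.
Qed.

Lemma Yf_red y : 0 < y -> Yf beta y = Ybar beta * exp (red_u y).
Proof.
  intros Hy. pose proof (y0_pos beta).
  unfold Ybar. rewrite !Yf_closed by lra. unfold Rpower, red_u.
  replace ((2 - beta) * ln y) with ((2 - beta) * ln (y0 beta) + (2 - beta) * (ln y - ln (y0 beta)))
    by ring.
  rewrite exp_plus. field. lra.
Qed.

Lemma sqrt_Ybar_Yf y : 0 < y -> sqrt (Ybar beta * Yf beta y) = Ybar beta * exp (red_u y / 2).
Proof.
  intros Hy. pose proof Ybar_pos. pose proof (exp_pos (red_u y / 2)).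
  rewrite Yf_red, <- exp_half_mul by exact Hy.
  replace (Ybar beta * (Ybar beta * (exp (red_u y / 2) * exp (red_u y / 2))))
    with ((Ybar beta * exp (red_u y / 2)) * (Ybar beta * exp (red_u y / 2))) by ring.
  apply sqrt_square. nra.
Qed.

Lemma sqrt_Yf y : 0 < y -> sqrt (Yf beta y) = sqrt (Ybar beta) * exp (red_u y / 2).
Proof.
  intros Hy. pose proof Ybar_pos. pose proof (exp_pos (red_u y / 2)).
  rewrite Yf_red, <- exp_half_mul, sqrt_mult by (try exact Hy; nra).
  rewrite sqrt_square by lra. reflexivity.
Qed.

Lemma gfun_red y : 0 < y ->
  gfun gamma beta lambda (phi_pow theta) y = g_red (theta / 2) red_m red_L (red_u y).
Proof.
  intros Hy. set (u := red_u y).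
  pose proof Xbar_pos. pose proof (sqrt_lt_R0 _ Ybar_pos). pose proof (exp_pos (u / 2)).
  unfold gfun. rewrite sqrt_Ybar_Yf, sqrt_Yf, Derive_phi_pow_red by (try apply exp_pos; exact Hy).
  fold u. unfold g_red, red_L, Rpower. rewrite ln_exp, exp_Ropp.
  replace ((theta - 1) * (u / 2)) with ((theta / 2 - 1) * u + u / 2) by field.
  rewrite exp_plus. field. lra.
Qed.

Lemma Swel_red a y : 0 < y ->
  Swel gamma beta lambda (phi_pow theta) a y
  = Ybar beta * S_red (theta / 2) red_M red_L a (red_u y).
Proof.
  intros Hy. set (u := red_u y). pose proof Ybar_pos. pose proof (exp_pos (u / 2)).
  unfold Swel. rewrite sqrt_Ybar_Yf, Yf_red by exact Hy. fold u.
  rewrite Int_phi_pow by (auto; nra).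
  rewrite <- Rpower_mult_distr by lra.
  replace (Rpower (exp (u / 2)) theta) with (exp (theta / 2 * u))
    by (unfold Rpower; rewrite ln_exp; f_equal; field).
  replace (Rpower (Ybar beta) theta) with (Rpower (Ybar beta) (theta - 1) * Ybar beta)
    by (replace theta with ((theta - 1) + 1) at 2 by ring; now rewrite Rpower_plus, Rpower_1).
  unfold S_red, red_M, red_K, red_L. field. lra.
Qed.

Lemma zeta_red_eq : zeta gamma beta lambda (phi_pow theta) = zeta_red (theta / 2) red_M red_L.
Proof.
  pose proof Ybar_pos. pose proof Xbar_pos. pose proof red_m_lt.
  unfold zeta. rewrite Int_Derive_phi_pow by auto.
  replace (Ybar beta * x0 gamma) with (x0 gamma * (Ybar beta * 1)) by ring.
  rewrite Derive_phi_pow_red by lra.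
  replace (Rpower 1 (theta - 1)) with 1 by (unfold Rpower; now rewrite ln_1, Rmult_0_r, exp_0).
  (* the first candidate is [g_red 0], the second one is [zeta_red] *)
  replace (/ 2 * (red_m * 1 / Xbar gamma + lambda) * Xbar gamma) with ((red_m + red_L) / 2)
    by (unfold red_L; field; lra).
  rewrite Rmax_right; unfold zeta_red, red_M, red_K, red_L in *; [field|]; lra.
Qed.

Lemma red_u_y0 : red_u (y0 beta) = 0.
Proof. unfold red_u. ring. Qed.

Lemma red_u_nonpos y : y0 beta <= y -> red_u y <= 0.
Proof.
  intros Hy. pose proof (ln_le _ _ (y0_pos beta) Hy). unfold red_u. nra.
Qed.

Lemma red_u_inj y y' : 0 < y -> 0 < y' -> red_u y = red_u y' -> y = y'.
Proof.
  intros Hy Hy' H. unfold red_u in H. apply ln_inv; [exact Hy|exact Hy'|].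
  apply Rmult_eq_reg_l in H; lra.
Qed.

Lemma red_u_surj u : u <= 0 -> exists y, y0 beta <= y /\ red_u y = u.
Proof.
  intros Hu. pose proof (y0_pos beta).
  exists (y0 beta * exp (u / (2 - beta))). split.
  - assert (0 <= u / (2 - beta)).
    { replace (u / (2 - beta)) with (- u / (beta - 2)) by (field; lra).
      apply Rdiv_le_0_compat; lra. }
    pose proof (exp_ineq1_le (u / (2 - beta))). nra.
  - unfold red_u. rewrite ln_mult, ln_exp by (try apply exp_pos; lra). field. lra.
Qed.

End Model.

Theorem theorem5 (gamma beta lambda theta : R) :
  2 < gamma -> 2 < beta -> 0 < lambda -> 0 < theta < 1 ->
  let phi := phi_pow theta in
  let z := zeta gamma beta lambda phi in
  (* for every a > zeta the revenue-maximizing threshold y_star(a) >= y0 is well defined *)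
  (forall a, z < a -> exists! y, y0 beta <= y /\ gfun gamma beta lambda phi y = a) /\
  (* the threshold abar *)
  exists! abar, z < abar /\
    (forall a y, z < a < abar -> y0 beta <= y -> gfun gamma beta lambda phi y = a ->
       Swel gamma beta lambda phi a (y0 beta) > Swel gamma beta lambda phi a y) /\
    (forall a y, abar < a -> y0 beta <= y -> gfun gamma beta lambda phi y = a ->
       Swel gamma beta lambda phi a y > Swel gamma beta lambda phi a (y0 beta)).
Proof.
  intros Hg Hb Hl Hth phi z.
  change (welfare_threshold (fun y => y0 beta <= y) (y0 beta) z
            (gfun gamma beta lambda phi) (Swel gamma beta lambda phi)).
  subst phi z. rewrite zeta_red_eq by assumption.
  assert (Hred := reduced_threshold (theta / 2) _ _ _ ltac:(lra)
                    (red_M_pos gamma beta theta Hg Hth) (red_m_pos gamma beta theta Hg Hth)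
                    (red_L_pos gamma lambda Hg Hl) (red_m_lt gamma beta theta Hg Hth)).
  pose proof (y0_pos beta).
  apply (welfare_threshold_transfer (red_u beta) (Ybar beta) Hred).
  - now apply Ybar_pos.
  - now apply red_u_nonpos.
  - now apply red_u_surj.
  - intros y y' Hy Hy'. apply red_u_inj; lra.
  - lra.
  - apply red_u_y0.
  - intros y Hy. apply gfun_red; lra.
  - intros a y Hy. apply Swel_red; lra.
Qed.
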